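(* Let $p>0$ and let $(u_n)_{n\ge0}$ be a sequence in $E^1$ with partial sums $s_n=\sum_{k=0}^n u_k$. If the series $\sum u_n$ converges to $\nu\in E^1$ (i.e. $D(s_n,\nu)\to0$), then $\sum u_n$ is $E_p$ summable to $\nu$, i.e. $D\big(\frac{1}{(p+1)^n}\sum_{k=0}^n\binom{n}{k}p^{n-k}s_k,\nu\big)\to0$.
   Context: $E^1$ denotes the set of fuzzy numbers: functions $u:\mathbb{R}\to[0,1]$ that are normal, fuzzy convex, upper semicontinuous, and have compact support $\overline{\{t:u(t)>0\}}$. For $\alpha\in(0,1]$ the $\alpha$-level set is $[u]_\alpha=\{t:u(t)\ge\alpha\}$ and $[u]_0=\overline{\{t:u(t)>0\}}$; each is a compact interval $[u^-_\alpha,u^+_\alpha]$. Addition and scalar multiplication are defined levelwise: $[u+v]_\alpha=[u^-_\alpha+v^-_\alpha,u^+_\alpha+v^+_\alpha]$ and $[ku]_\alpha=k[u]_\alpha$ for $k\in\mathbb{R}$. The metric is $D(u,v)=\sup_{\alpha\in[0,1]}\max\{|u^-_\alpha-v^-_\alpha|,|u^+_\alpha-v^+_\alpha|\}$. A series $\sum u_n$ of fuzzy numbers is $E_p$ summable to $\nu$ if its sequence of partial sums $(s_n)$ has Euler means $\frac{1}{(p+1)^n}\sum_{k=0}^n\binom{n}{k}p^{n-k}s_k$ converging to $\nu$ in $D$. *)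

From HB Require Import structures.
From mathcomp Require Import all_boot all_order all_algebra.
From mathcomp Require Import all_classical all_reals all_analysis.
Set Implicit Arguments. Unset Strict Implicit. Unset Printing Implicit Defensive.
Import Order.TTheory GRing.Theory Num.Theory.
Import numFieldNormedType.Exports.
Local Open Scope classical_set_scope.
Local Open Scope ring_scope.

Section Fuzzy.
Variable R : realType.

Definition level (u : R -> R) (a : R) : set R :=
  if a == 0 then closure [set t | 0 < u t] else [set t | a <= u t].

Definition lend (u : R -> R) (a : R) : R := inf (level u a).
Definition rend (u : R -> R) (a : R) : R := sup (level u a).

Definition is_fuzzy (u : R -> R) : Prop :=
  [/\ (forall t, 0 <= u t <= 1),
      (exists t, u t = 1),
      (forall x y l, 0 <= l <= 1 ->
          Num.min (u x) (u y) <= u (l * x + (1 - l) * y)),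
      (forall t e, 0 < e -> \forall s \near t, u s < u t + e) &
      compact (closure [set t | 0 < u t])].

(* levelwise addition: the fuzzy number whose a-level is [u]_a + [v]_a *)
Definition fadd (u v : R -> R) : R -> R := fun t =>
  sup ([set 0] `|` [set a | 0 <= a <= 1 /\
         exists x y, level u a x /\ level v a y /\ t = x + y]).

(* levelwise scalar multiplication: a-level k[u]_a *)
Definition fscale (k : R) (u : R -> R) : R -> R := fun t =>
  sup ([set 0] `|` [set a | 0 <= a <= 1 /\
         exists x, level u a x /\ t = k * x]).

Definition fdist (u v : R -> R) : R :=
  sup [set d | exists a, 0 <= a <= 1 /\
         d = Num.max `|lend u a - lend v a| `|rend u a - rend v a|].

Fixpoint fsum (f : nat -> R -> R) (n : nat) : R -> R :=
  match n with
  | 0 => f 0%N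
  | m.+1 => fadd (fsum f m) (f m.+1)
  end.

Definition euler_mean (p : R) (s : nat -> R -> R) (n : nat) : R -> R :=
  fscale ((p + 1) ^- n)
    (fsum (fun k => fscale ('C(n, k)%:R * p ^+ (n - k)) (s k)) n).

End Fuzzy.

From HB Require Import structures.
From mathcomp Require Import all_boot all_order all_algebra.
From mathcomp Require Import all_classical all_reals all_analysis.
From mathcomp Require Import ring lra zify.
Set Implicit Arguments. Unset Strict Implicit. Unset Printing Implicit Defensive.
Import Order.TTheory GRing.Theory Num.Theory.
Import numFieldNormedType.Exports.
Local Open Scope classical_set_scope.
Local Open Scope ring_scope.

(* A fuzzy number u is determined by its endpoint functions a |-> u^-_a and
   a |-> u^+_a on [0,1]: they are nested, left-continuous on (0,1] and
   right-continuous at 0, and each level set is the interval between them.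
   Conversely [fuzzy_of_ends] rebuilds from any such pair a function with
   exactly these level sets, and [fadd], [fscale k] (k >= 0) are such
   reconstructions from the sums, resp. the multiples, of endpoint functions.
   Hence the endpoints of the Euler mean E_n are the averages
   sum_k w_{n,k} s_k^(+-)_a of the endpoints of the partial sums, with weights
   w_{n,k} = C(n,k) p^(n-k) / (p+1)^n >= 0 summing to 1, so that
   D(E_n, nu) <= sum_k w_{n,k} D(s_k, nu).  The right-hand side tends to 0 by
   the Toeplitz theorem, as w_{n,k} (n-k) <= p (k+1) makes every column tend
   to 0. *)

Section real_sets.
Variable R : realType.
Implicit Types (A : set R) (l r k t : R).

Lemma closure_inf A : A !=set0 -> has_lbound A -> closure A (inf A).
Proof.
move=> A0 lA B /nbhs_ballP[e e0 eB].
have [x Ax xe] := inf_adherent e0 (conj A0 lA).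
exists x; split => //; apply: eB; rewrite -ball_normE /= ltr_distl.
by have := ge_inf lA Ax => ?; apply/andP; split; lra.
Qed.

Lemma closed_convex_itvcc A : closed A -> A !=set0 ->
  has_lbound A -> has_ubound A ->
  (forall x y t, A x -> A y -> x <= t <= y -> A t) ->
  A = `[inf A, sup A]%classic.
Proof.
move=> /closure_id cA A0 lA uA convA; apply/seteqP; split => t.
  by move=> At; rewrite /= in_itv /= (ge_inf lA At) (ub_le_sup uA At).
rewrite /= in_itv /= => t_in; apply: convA t_in.
  by rewrite {1}cA; exact: closure_inf.
by rewrite {1}cA; exact: closure_sup.
Qed.

Lemma itvcc_addP l1 r1 l2 r2 t : l1 <= r1 -> l2 <= r2 ->
  (exists x y, `[l1, r1]%classic x /\ `[l2, r2]%classic y /\ t = x + y) <->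
  l1 + l2 <= t <= r1 + r2.
Proof.
move=> lr1 lr2; split.
  by case=> x [y []]; rewrite /= !in_itv /= => /andP[? ?] [/andP[? ?] ->]; lra.
move=> /andP[lt tr]; have [le_l1|lt_l1] := leP l1 (t - r2).
  exists (t - r2), r2; rewrite /= !in_itv /= lexx lr2.
  by split; [apply/andP; split; lra | split; [|ring]].
exists l1, (t - l1); rewrite /= !in_itv /= lexx lr1.
by split; [|split; [apply/andP; split; lra | ring]].
Qed.

Lemma itvcc_scaleP k l r t : 0 <= k -> l <= r ->
  (exists x, `[l, r]%classic x /\ t = k * x) <-> k * l <= t <= k * r.
Proof.
move=> k0 lr; split.
  by case=> x []; rewrite /= in_itv /= => /andP[? ?] ->; rewrite !ler_wpM2l.
move=> /andP[lt tr]; have [k_eq0|k_neq0] := eqVneq k 0.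
  move: lt tr; rewrite k_eq0 !mul0r => t_ge0 t_le0.
  exists l; rewrite /= in_itv /= lexx lr mul0r.
  by split => //; apply/eqP; rewrite eq_le t_le0.
have kp : 0 < k by rewrite lt_def k_neq0 k0.
exists (t / k); split; last by rewrite mulrC divfK.
by rewrite /= in_itv /= ler_pdivlMr // ler_pdivrMr // ![_ * k]mulrC lt tr.
Qed.

End real_sets.

Section ends_profile.
Variable R : realType.
Implicit Types (L U : R -> R) (u v : R -> R) (a b e k t : R).

Record ends_profile L U : Prop := EndsProfile {
  ends_le : forall a, 0 <= a <= 1 -> L a <= U a;
  ends_nested : forall a b, 0 <= a -> a <= b -> b <= 1 ->
    L a <= L b /\ U b <= U a;
  ends_left_cont : forall a e, 0 < a <= 1 -> 0 < e ->
    exists2 b, 0 <= b < a & L a - e < L b /\ U b < U a + e;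
  ends_right_cont0 : forall e, 0 < e ->
    exists2 b, 0 < b <= 1 & L b < L 0 + e /\ U 0 - e < U b }.

Lemma ends_profile_eq L U L' U' :
  (forall a, 0 <= a <= 1 -> L a = L' a /\ U a = U' a) ->
  ends_profile L U -> ends_profile L' U'.
Proof.
move=> E [le_LU nested lcont rcont0].
have in01 a b : 0 <= a -> a <= b -> b <= 1 -> 0 <= a <= 1 /\ 0 <= b <= 1.
  by move=> a0 ab b1; rewrite a0 b1 (le_trans a0 ab) (le_trans ab b1).
split.
- by move=> a /[dup] /E[<- <-]; exact: le_LU.
- move=> a b a0 ab b1; have [/E[<- <-] /E[<- <-]] := in01 _ _ a0 ab b1.
  exact: nested.
- move=> a e /[dup] a01 /andP[a0 a1] e0.
  have [b /andP[b0 ba] ?] := lcont a e a01 e0.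
  exists b; first by rewrite b0 ba.
  by have [/E[<- <-] /E[<- <-]] := in01 _ _ b0 (ltW ba) a1.
- move=> e e0; have [b /andP[b0 b1] ?] := rcont0 e e0.
  exists b; first by rewrite b0 b1.
  by have [/E[<- <-] /E[<- <-]] := in01 _ _ (lexx 0) (ltW b0) b1.
Qed.

Lemma ends_profileD L1 U1 L2 U2 : ends_profile L1 U1 -> ends_profile L2 U2 ->
  ends_profile (L1 \+ L2) (U1 \+ U2).
Proof.
move=> [le1 nest1 lcont1 rcont1] [le2 nest2 lcont2 rcont2].
split => /=.
- by move=> a a01; rewrite lerD ?le1 ?le2.
- move=> a b a0 ab b1; have [? ?] := nest1 a b a0 ab b1.
  by have [? ?] := nest2 a b a0 ab b1; rewrite !lerD.
- move=> a e /[dup] a01 /andP[_ a1] e0; have e2 : 0 < e / 2 by rewrite divr_gt0.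
  have [b /andP[b0 ba] [? ?]] := lcont1 a _ a01 e2.
  have [c /andP[c0 ca] [? ?]] := lcont2 a _ a01 e2.
  have [bc|cb] := leP b c.
    have [? ?] := nest1 b c b0 bc (le_trans (ltW ca) a1).
    by exists c; [rewrite c0 ca | split; lra].
  have [? ?] := nest2 c b c0 (ltW cb) (le_trans (ltW ba) a1).
  by exists b; [rewrite b0 ba | split; lra].
- move=> e e0; have e2 : 0 < e / 2 by rewrite divr_gt0.
  have [b /andP[b0 b1] [? ?]] := rcont1 _ e2.
  have [c /andP[c0 c1] [? ?]] := rcont2 _ e2.
  have [bc|cb] := leP b c.
    have [? ?] := nest2 b c (ltW b0) bc c1.
    by exists b; [rewrite b0 b1 | split; lra].
  have [? ?] := nest1 c b (ltW c0) (ltW cb) b1.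
  by exists c; [rewrite c0 c1 | split; lra].
Qed.

Lemma ends_profileZ k L U : 0 <= k -> ends_profile L U ->
  ends_profile (fun a => k * L a) (fun a => k * U a).
Proof.
move=> k0 [le_LU nested lcont rcont0].
have e' e : 0 < e -> 0 < e / (k + 1) /\ k * (e / (k + 1)) < e.
  move=> e0; have k1 : 0 < k + 1 by lra.
  by rewrite divr_gt0 // mulrA ltr_pdivrMr // mulrDr mulr1; split => //; lra.
split.
- by move=> a a01; rewrite ler_wpM2l ?le_LU.
- by move=> a b a0 ab b1; have [? ?] := nested a b a0 ab b1; rewrite !ler_wpM2l.
- move=> a e a01 /e'[e0 ke]; have [b b01 [Lb Ub]] := lcont a _ a01 e0.
  exists b => //; split.
    by have := ler_wpM2l k0 (ltW Lb); rewrite mulrBr; lra.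
  by have := ler_wpM2l k0 (ltW Ub); rewrite mulrDr; lra.
- move=> e /e'[e0 ke]; have [b b01 [Lb Ub]] := rcont0 _ e0.
  exists b => //; split.
    by have := ler_wpM2l k0 (ltW Lb); rewrite mulrDr; lra.
  by have := ler_wpM2l k0 (ltW Ub); rewrite mulrBr; lra.
Qed.

Lemma closure_ends_union L U l r :
  (forall b, 0 < b <= 1 -> [/\ l <= L b, L b <= U b & U b <= r]) ->
  (forall e, 0 < e -> exists2 b, 0 < b <= 1 & L b < l + e /\ r - e < U b) ->
  closure [set t | exists2 b, 0 < b <= 1 & L b <= t <= U b] = `[l, r]%classic.
Proof.
move=> bounds approx; apply/seteqP; split.
  have /closure_id -> : closed `[l, r]%classic by exact: interval_closed.
  apply: closureS => t [b /bounds[? ? ?] /andP[? ?]].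
  by rewrite /= in_itv /=; apply/andP; split; lra.
move=> t; rewrite /= in_itv /= => /andP[lt tr] B /nbhs_ballP[e e0 eB].
have [b b01 [Lb Ub]] := approx e e0; have [? LUb ?] := bounds b b01.
have near_t x : - e < x - t < e -> B x.
  move=> /andP[? ?]; apply: eB.
  by rewrite -ball_normE /= ltr_distl; apply/andP; split; lra.
have [tL|Lt] := ltP t (L b).
  exists (L b); split; first by exists b => //; rewrite lexx LUb.
  by apply: near_t; apply/andP; split; lra.
have [Ut|tU] := ltP (U b) t.
  exists (U b); split; first by exists b => //; rewrite lexx LUb.
  by apply: near_t; apply/andP; split; lra.
by exists t; split; [exists b => //; rewrite Lt tU | apply: eB; exact: ballxx].
Qed.

Definition fuzzy_of_ends L U : R -> R := fun t =>
  sup ([set 0] `|` [set a | 0 <= a <= 1 /\ L a <= t <= U a]).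

Section fuzzy_of_ends.
Variables L U : R -> R.
Local Notation f := (fuzzy_of_ends L U).

Let grades_ub t : has_ubound ([set 0] `|` [set a | 0 <= a <= 1 /\ L a <= t <= U a]).
Proof. by exists 1 => a [->|[/andP[_ ->]]]. Qed.

Lemma fuzzy_of_ends_ge a t : 0 <= a <= 1 -> L a <= t <= U a -> a <= f t.
Proof. by move=> a01 t_in; apply: (ub_le_sup (grades_ub t)); right. Qed.

Lemma fuzzy_of_ends_le b t : 0 <= b ->
  (forall a, b < a <= 1 -> ~ (L a <= t <= U a)) -> f t <= b.
Proof.
move=> b0 out; apply: ge_sup; first by exists 0; left.
move=> a [->//|[/andP[a0 a1] t_in]]; rewrite leNgt; apply/negP => ba.
by apply: (out a) => //; rewrite ba.
Qed.

Lemma fuzzy_of_ends_gt0 t : 0 < f t -> exists2 b, 0 < b <= 1 & L b <= t <= U b.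
Proof.
move=> ft_gt0; have [|a [->|[/andP[_ a1] t_in]] a_gt0] := sup_gt _ ft_gt0.
- by exists 0; left.
- by rewrite ltxx in a_gt0.
- by exists a; rewrite ?a_gt0.
Qed.

Hypothesis LU : ends_profile L U.

Lemma level0_fuzzy_of_ends : level f 0 = `[L 0, U 0]%classic.
Proof.
have [le_LU nested _ rcont0] := LU.
rewrite /level eqxx -(closure_ends_union (L := L) (U := U)) //.
- congr closure; apply/seteqP; split => t; first exact: fuzzy_of_ends_gt0.
  move=> [b /andP[b0 b1] t_in] /=.
  by apply: (lt_le_trans b0 (fuzzy_of_ends_ge _ t_in)); rewrite (ltW b0).
- move=> b /andP[b0 b1]; have [? ?] := nested 0 b (lexx 0) (ltW b0) b1.
  by split => //; apply: le_LU; rewrite (ltW b0).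
Qed.

Lemma level_pos_fuzzy_of_ends a : 0 < a <= 1 -> level f a = `[L a, U a]%classic.
Proof.
move=> /[dup] a01 /andP[a0 a1]; have [_ nested lcont _] := LU.
rewrite /level gt_eqF //; apply/seteqP; split => t; last first.
  by rewrite /= in_itv /=; apply: fuzzy_of_ends_ge; rewrite (ltW a0).
rewrite /= in_itv /= => le_a; apply/negPn/negP; rewrite negb_and -!ltNge => t_out.
(* By left continuity at a, no interval of a level above some b < a contains t. *)
suff [b /andP[b0 ba] out] : exists2 b, 0 <= b < a &
    forall c, b < c <= 1 -> ~ (L c <= t <= U c).
  by have := fuzzy_of_ends_le b0 out; lra.
case/orP: t_out => [tL|Ut].
  have [b /andP[b0 ba] [Lb _]] := lcont a (L a - t) a01 (ltac:(lra)).
  exists b; rewrite ?b0 ?ba // => c /andP[bc c1] /andP[Lc _].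
  by have [+ _] := nested b c b0 (ltW bc) c1; lra.
have [b /andP[b0 ba] [_ Ub]] := lcont a (t - U a) a01 (ltac:(lra)).
exists b; rewrite ?b0 ?ba // => c /andP[bc c1] /andP[_ Uc].
by have [_ +] := nested b c b0 (ltW bc) c1; lra.
Qed.

Lemma level_fuzzy_of_ends a : 0 <= a <= 1 -> level f a = `[L a, U a]%classic.
Proof.
move=> /andP[a0 a1]; have [<-|a_neq0] := eqVneq 0 a; first exact: level0_fuzzy_of_ends.
by apply: level_pos_fuzzy_of_ends; rewrite lt_def eq_sym a_neq0 a0.
Qed.

Lemma ends_fuzzy_of_ends a : 0 <= a <= 1 -> lend f a = L a /\ rend f a = U a.
Proof.
move=> a01; have le_LU := ends_le LU a01.
by rewrite /lend /rend level_fuzzy_of_ends // inf_itvcc // sup_itvcc.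
Qed.

End fuzzy_of_ends.

Record interval_levels u : Prop := IntervalLevels {
  interval_levels_profile : ends_profile (lend u) (rend u);
  interval_levelsE : forall a, 0 <= a <= 1 -> level u a = `[lend u a, rend u a]%classic }.

Lemma interval_levels_fuzzy_of_ends L U : ends_profile L U ->
  interval_levels (fuzzy_of_ends L U).
Proof.
move=> LU; split; last first.
  by move=> a a01; have [-> ->] := ends_fuzzy_of_ends LU a01; exact: level_fuzzy_of_ends.
by apply: (ends_profile_eq _ LU) => a a01; have [-> ->] := ends_fuzzy_of_ends LU a01.
Qed.

End ends_profile.

Section weighted_means.
Variable R : realType.
Implicit Types (p : R) (n k : nat).

Lemma weighted_mean_dist_le n (w x c : nat -> R) y :
  (forall k, 0 <= w k) -> \sum_(k < n) w k = 1 ->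
  (forall k, `|x k - y| <= c k) ->
  `|\sum_(k < n) w k * x k - y| <= \sum_(k < n) w k * c k.
Proof.
move=> w0 w1 xc.
have -> : \sum_(k < n) w k * x k - y = \sum_(k < n) w k * (x k - y).
  by rewrite -[y in LHS]mul1r -w1 mulr_suml -sumrB; apply: eq_bigr => k _; rewrite mulrBr.
apply: le_trans (ler_norm_sum _ _ _) _; apply: ler_sum => k _.
by rewrite normrM ger0_norm // ler_wpM2l.
Qed.

Lemma nonneg_toeplitz (w : nat -> nat -> R) (d : R ^nat) :
  (forall n k, 0 <= w n k) -> (forall n, \sum_(k < n.+1) w n k = 1) ->
  (forall k, w n k @[n --> \oo] --> 0) -> d @ \oo --> 0 ->
  \sum_(k < n.+1) w n k * d k @[n --> \oo] --> 0.
Proof.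
move=> w0 w1 w_cvg0 /cvgrPdist_le d_cvg0; apply/cvgrPdist_le => e e0.
have e2 : 0 < e / 2 by rewrite divr_gt0.
have [N _ d_small] := d_cvg0 _ e2.
have head_cvg0 : \sum_(k < N) w n k * d k @[n --> \oo] --> \sum_(k < N) 0 * d k.
  by apply: cvg_big => [|k _]; [exact: add_continuous | apply: cvgM => //; exact: cvg_cst].
rewrite big1 in head_cvg0; last by move=> k _; rewrite mul0r.
have /cvgrPdist_le /(_ _ e2) head_small := head_cvg0.
near=> n; have Nn : (N <= n.+1)%N by apply: leqW; near: n; exact: nbhs_infty_ge.
rewrite sub0r normrN -(big_mkord xpredT (fun k => w n k * d k)).
rewrite (big_cat_nat (leq0n N) Nn) /=.
apply: le_trans (ler_normD _ _) _; rewrite [e]splitr; apply: lerD.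
  by rewrite big_mkord -normrN -sub0r; near: n; exact: head_small.
apply: le_trans (ler_norm_sum _ _ _) _.
apply: le_trans (_ : \sum_(N <= k < n.+1) w n k * (e / 2) <= _).
  apply: ler_sum_nat => k /andP[Nk _]; rewrite normrM ger0_norm // ler_wpM2l //.
  by have := d_small k Nk; rewrite sub0r normrN.
have tail_le1 : \sum_(N <= k < n.+1) w n k <= 1.
  rewrite -(w1 n) -(big_mkord xpredT (w n)) (big_cat_nat (leq0n N) Nn) /= lerDr.
  exact: sumr_ge0.
by rewrite -mulr_suml ler_piMl // ltW.
Unshelve. all: end_near.
Qed.

Definition euler_weight p n k : R := (p + 1) ^- n * ('C(n, k)%:R * p ^+ (n - k)).

Section euler_weight.
Variable p : R.
Hypothesis p_ge0 : 0 <= p.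

Let binomial_expansion n :
  (p + 1) ^+ n = \sum_(k < n.+1) 'C(n, k)%:R * p ^+ (n - k).
Proof. by rewrite exprDn; apply: eq_bigr => k _; rewrite expr1n mulr1 mulr_natl. Qed.

Let pow_p1_gt0 n : 0 < (p + 1) ^+ n.
Proof. by rewrite exprn_gt0 // ltr_wpDl. Qed.

Lemma euler_weight_ge0 n k : 0 <= euler_weight p n k.
Proof. by rewrite /euler_weight !mulr_ge0 ?exprn_ge0 // invr_ge0 ltW. Qed.

Lemma sum_euler_weight n : \sum_(k < n.+1) euler_weight p n k = 1.
Proof. by rewrite -mulr_sumr -binomial_expansion mulVf // gt_eqF. Qed.

Lemma euler_weight_le n k : (k < n)%N ->
  euler_weight p n k * (n - k)%:R <= p * k.+1%:R.
Proof.
move=> kn.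
have shift : 'C(n, k)%:R * p ^+ (n - k) * (n - k)%:R =
             p * k.+1%:R * ('C(n, k.+1)%:R * p ^+ (n - k.+1)) :> R.
  have bin_shift : ('C(n, k) * (n - k) = k.+1 * 'C(n, k.+1))%N.
    by rewrite mul_bin_left mulnC.
  by rewrite mulrAC -natrM bin_shift natrM -(subnSK kn) exprS; ring.
rewrite /euler_weight -mulrA ler_pdivrMl // shift [leRHS]mulrC ler_wpM2l ?mulr_ge0 //.
rewrite binomial_expansion (bigD1 (Ordinal (kn : (k.+1 < n.+1)%N))) //= lerDl.
by apply: sumr_ge0 => i _; rewrite mulr_ge0 ?exprn_ge0.
Qed.

Lemma euler_weight_cvg0 k : euler_weight p n k @[n --> \oo] --> 0.
Proof.
rewrite -(cvg_shiftn k.+1).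
apply: (squeeze_cvgr (f := fun=> 0) (h := fun n => p * k.+1%:R * harmonic n)).
- near=> n; rewrite /= euler_weight_ge0 /=.
  have := euler_weight_le (ltac:(lia) : (k < n + k.+1)%N).
  by rewrite addnS -addSn addnK ler_pdivlMr ?ltr0Sn.
- exact: cvg_cst.
- by rewrite -(mulr0 (p * k.+1%:R)); apply: cvgM; [exact: cvg_cst | exact: cvg_harmonic].
Unshelve. all: end_near.
Qed.

End euler_weight.
End weighted_means.

Section levelwise_arithmetic.
Variable R : realType.
Implicit Types (u v : R -> R) (a : R).

Lemma fadd_fuzzy_of_ends u v : interval_levels u -> interval_levels v ->
  fadd u v = fuzzy_of_ends (lend u \+ lend v) (rend u \+ rend v).
Proof.
move=> [[le_u _ _ _] levels_u] [[le_v _ _ _] levels_v]; apply/funext => t.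
congr (sup (_ `|` _)); apply/seteqP; split => a [a01 t_in]; split => //=;
  by move: t_in; rewrite levels_u // levels_v // itvcc_addP ?le_u ?le_v.
Qed.

Lemma fscale_fuzzy_of_ends (k : R) u : 0 <= k -> interval_levels u ->
  fscale k u = fuzzy_of_ends (fun a => k * lend u a) (fun a => k * rend u a).
Proof.
move=> k0 [[le_u _ _ _] levels_u]; apply/funext => t.
congr (sup (_ `|` _)); apply/seteqP; split => a [a01 t_in]; split => //=;
  by move: t_in; rewrite levels_u // itvcc_scaleP ?le_u.
Qed.

Lemma interval_levels_fadd u v : interval_levels u -> interval_levels v ->
  interval_levels (fadd u v).
Proof.
move=> Iu Iv; rewrite fadd_fuzzy_of_ends //; apply: interval_levels_fuzzy_of_ends.
exact: ends_profileD (interval_levels_profile Iu) (interval_levels_profile Iv).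
Qed.

Lemma ends_fadd u v a : interval_levels u -> interval_levels v -> 0 <= a <= 1 ->
  lend (fadd u v) a = lend u a + lend v a /\ rend (fadd u v) a = rend u a + rend v a.
Proof.
move=> Iu Iv a01; rewrite fadd_fuzzy_of_ends //; apply: ends_fuzzy_of_ends a01.
exact: ends_profileD (interval_levels_profile Iu) (interval_levels_profile Iv).
Qed.

Lemma interval_levels_fscale (k : R) u : 0 <= k -> interval_levels u ->
  interval_levels (fscale k u).
Proof.
move=> k0 Iu; rewrite fscale_fuzzy_of_ends //; apply: interval_levels_fuzzy_of_ends.
exact: ends_profileZ (interval_levels_profile Iu).
Qed.

Lemma ends_fscale (k : R) u a : 0 <= k -> interval_levels u -> 0 <= a <= 1 ->
  lend (fscale k u) a = k * lend u a /\ rend (fscale k u) a = k * rend u a.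
Proof.
move=> k0 Iu a01; rewrite fscale_fuzzy_of_ends //; apply: ends_fuzzy_of_ends a01.
exact: ends_profileZ (interval_levels_profile Iu).
Qed.

Section fsum.
Variable f : nat -> R -> R.
Hypothesis If : forall k, interval_levels (f k).

Lemma interval_levels_fsum n : interval_levels (fsum f n).
Proof. by elim: n => [|n IHn] //=; exact: interval_levels_fadd. Qed.

Lemma ends_fsum n a : 0 <= a <= 1 ->
  lend (fsum f n) a = \sum_(k < n.+1) lend (f k) a /\
  rend (fsum f n) a = \sum_(k < n.+1) rend (f k) a.
Proof.
move=> a01; elim: n => [|n [IHl IHr]] /=; first by rewrite !big_ord1.
have [-> ->] := ends_fadd (interval_levels_fsum n) (If n.+1) a01.
by rewrite IHl IHr (big_ord_recr n.+1) (big_ord_recr n.+1 (fun k => rend (f k) a)).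
Qed.

End fsum.

Section euler_mean.
Variables (p : R) (s : nat -> R -> R) (n : nat).
Hypotheses (p_ge0 : 0 <= p) (Is : forall k, interval_levels (s k)).

Let coef_ge0 k : 0 <= 'C(n, k)%:R * p ^+ (n - k).
Proof. by rewrite mulr_ge0 ?exprn_ge0. Qed.

Let Iterm k : interval_levels (fscale ('C(n, k)%:R * p ^+ (n - k)) (s k)).
Proof. exact: interval_levels_fscale. Qed.

Let scale_ge0 : 0 <= (p + 1) ^- n.
Proof. by rewrite invr_ge0 exprn_ge0 // addr_ge0. Qed.

Lemma interval_levels_euler_mean : interval_levels (euler_mean p s n).
Proof. by apply: interval_levels_fscale; last exact: interval_levels_fsum. Qed.

Lemma ends_euler_mean a : 0 <= a <= 1 ->
  lend (euler_mean p s n) a = \sum_(k < n.+1) euler_weight p n k * lend (s k) a /\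
  rend (euler_mean p s n) a = \sum_(k < n.+1) euler_weight p n k * rend (s k) a.
Proof.
move=> a01; have [-> ->] := ends_fscale scale_ge0 (interval_levels_fsum Iterm n) a01.
have [-> ->] := ends_fsum Iterm n a01; rewrite !mulr_sumr.
by split; apply: eq_bigr => k _; have [El Er] := ends_fscale (coef_ge0 k) (Is k) a01;
  rewrite ?El ?Er mulrA.
Qed.

End euler_mean.
End levelwise_arithmetic.

Section fuzzy_number.
Variables (R : realType) (u : R -> R).
Hypothesis u_fuzzy : is_fuzzy u.
Implicit Types (a b e t : R).

Let u01 t : 0 <= u t <= 1.
Proof. by case: u_fuzzy. Qed.

Lemma fuzzy_support_bounded : exists M, forall t, 0 < u t -> `|t| <= M.
Proof.
have [_ _ _ _ /compact_bounded[M [_ HM]]] := u_fuzzy.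
exists (M + 1) => t ut; have := HM (M + 1) (ltac:(by rewrite ltrDl)).
by apply; exact: subset_closure.
Qed.

Lemma closed_superlevel a : closed [set t | a <= u t].
Proof.
have [_ _ _ usc _] := u_fuzzy; rewrite closedE => t t_lim; rewrite /= leNgt.
apply/negP => ut_lt; apply: t_lim; have := usc t (a - u t); rewrite subr_gt0.
by move=> /(_ ut_lt); apply: filterS => s /= ? ?; lra.
Qed.

Lemma superlevel_convex a x y t : a <= u x -> a <= u y -> x <= t <= y -> a <= u t.
Proof.
have [_ _ quasiconcave _ _] := u_fuzzy.
move=> ax ay /andP[xt ty]; have [xy|] := eqVneq x y.
  by have -> : t = x by apply/eqP; rewrite eq_le xt xy ty.
rewrite neq_lt => /orP[xy|]; last by lra.
pose l := (y - t) / (y - x).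
have l01 : 0 <= l <= 1.
  apply/andP; split; first by apply: divr_ge0; lra.
  by rewrite ler_pdivrMr ?subr_gt0 // mul1r; lra.
have -> : t = l * x + (1 - l) * y by rewrite /l; field; rewrite subr_eq0 gt_eqF.
by apply: le_trans (quasiconcave x y l l01); rewrite le_min ax ay.
Qed.

Lemma level_pos_itvcc a : 0 < a <= 1 ->
  level u a = `[lend u a, rend u a]%classic /\ lend u a <= rend u a.
Proof.
move=> /andP[a0 a1]; rewrite /lend /rend /level gt_eqF //.
set S := [set t | a <= u t].
have [t1 ut1] : S !=set0 by have [_ [t ut] _ _ _] := u_fuzzy; exists t; rewrite /S /= ut.
have [M HM] := fuzzy_support_bounded.
have S_bounded t : S t -> - M <= t <= M.
  by move=> St; rewrite -ler_norml HM // (lt_le_trans a0).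
have S_itv : S = `[inf S, sup S]%classic.
  apply: closed_convex_itvcc; first exact: closed_superlevel.
  - by exists t1.
  - by exists (- M) => t /S_bounded /andP[].
  - by exists M => t /S_bounded /andP[].
  - by move=> x y t; exact: superlevel_convex.
split => //; have : S t1 by [].
by rewrite {1}S_itv /= in_itv /= => /andP[/le_trans]; apply.
Qed.

Lemma mem_level_pos a t : 0 < a <= 1 -> (a <= u t) = (lend u a <= t <= rend u a).
Proof.
move=> /[dup] /andP[a0 _] /level_pos_itvcc[E _].
have levelE : level u a = [set t | a <= u t] by rewrite /level gt_eqF.
apply/idP/idP => [ut|t_in].
  have : level u a t by rewrite levelE.
  by rewrite E /= in_itv.
have : `[lend u a, rend u a]%classic t by rewrite /= in_itv.
by rewrite -E levelE.
Qed.

Lemma ends_nested_pos a b : 0 < a -> a <= b -> b <= 1 ->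
  lend u a <= lend u b /\ rend u b <= rend u a.
Proof.
move=> a0 ab b1; have a01 : 0 < a <= 1 by rewrite a0 (le_trans ab).
have b01 : 0 < b <= 1 by rewrite (lt_le_trans a0 ab) b1.
have [_ le_b] := level_pos_itvcc b01.
have in_a t : b <= u t -> lend u a <= t <= rend u a.
  by move=> bt; rewrite -mem_level_pos // (le_trans ab).
have /in_a/andP[? _] : b <= u (lend u b) by rewrite mem_level_pos // lexx le_b.
have /in_a/andP[_ ?] : b <= u (rend u b) by rewrite mem_level_pos // lexx le_b.
by [].
Qed.

Lemma mem_level_of_lt a t : 0 < a <= 1 ->
  (forall b, 0 < b < a -> lend u b <= t <= rend u b) -> lend u a <= t <= rend u a.
Proof.
move=> a01 t_in; rewrite -mem_level_pos //; apply/unstable.ler_ltP => b ba.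
have [b_le0|b_gt0] := leP b 0; first by have /andP[+ _] := u01 t; exact: le_trans.
by rewrite mem_level_pos ?t_in ?b_gt0 //; case/andP: a01 => _; exact: le_trans (ltW ba).
Qed.

Lemma lend_left_cont a e : 0 < a <= 1 -> 0 < e ->
  exists2 b, 0 < b < a & lend u a - e < lend u b.
Proof.
move=> /[dup] a01 /andP[a0 a1] e0.
(* Otherwise lend u a - e lies in all the levels below a, hence in level a. *)
apply: contrapT => no_b; suff /andP[] : lend u a <= lend u a - e <= rend u a by lra.
have [_ le_a] := level_pos_itvcc a01.
apply: mem_level_of_lt => // b /andP[b0 ba]; apply/andP; split.
  by rewrite leNgt; apply/negP => lt_b; apply: no_b; exists b; rewrite ?b0.
by have [_ ?] := ends_nested_pos b0 (ltW ba) a1; lra.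
Qed.

Lemma rend_left_cont a e : 0 < a <= 1 -> 0 < e ->
  exists2 b, 0 < b < a & rend u b < rend u a + e.
Proof.
move=> /[dup] a01 /andP[a0 a1] e0.
apply: contrapT => no_b; suff /andP[] : lend u a <= rend u a + e <= rend u a by lra.
have [_ le_a] := level_pos_itvcc a01.
apply: mem_level_of_lt => // b /andP[b0 ba]; apply/andP; split.
  by have [? _] := ends_nested_pos b0 (ltW ba) a1; lra.
by rewrite leNgt; apply/negP => lt_b; apply: no_b; exists b; rewrite ?b0.
Qed.

Lemma support_ends_union :
  [set t | 0 < u t] = [set t | exists2 b, 0 < b <= 1 & lend u b <= t <= rend u b].
Proof.
apply/seteqP; split => t /=.
  move=> ut; have ut1 : 0 < u t <= 1 by rewrite ut; case/andP: (u01 t).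
  by exists (u t) => //; rewrite -mem_level_pos.
by move=> [b /[dup] b01 /andP[b0 _]]; rewrite -mem_level_pos //; exact: lt_le_trans.
Qed.

Let P01 := [set b : R | 0 < b <= 1].
Let lend0 := inf (lend u @` P01).
Let rend0 := sup (rend u @` P01).

Let ends_pos_bounded :
  exists M, forall b, 0 < b <= 1 -> - M <= lend u b /\ rend u b <= M.
Proof.
have [M HM] := fuzzy_support_bounded; exists M => b /[dup] b01 /andP[b0 _].
have [_ le_b] := level_pos_itvcc b01.
have in_supp t : lend u b <= t <= rend u b -> `|t| <= M.
  by rewrite -mem_level_pos // => bt; apply: HM (lt_le_trans b0 bt).
move: (in_supp (lend u b)) (in_supp (rend u b)); rewrite !lexx le_b.
by move=> /(_ isT) + /(_ isT); rewrite !ler_norml => /andP[? _] /andP[_ ?].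
Qed.

Let lend_lbounded : has_lbound (lend u @` P01).
Proof. by have [M HM] := ends_pos_bounded; exists (- M) => _ [b /HM[? _] <-]. Qed.

Let rend_ubounded : has_ubound (rend u @` P01).
Proof. by have [M HM] := ends_pos_bounded; exists M => _ [b /HM[_ ?] <-]. Qed.

Lemma ends_within0 b : 0 < b <= 1 ->
  [/\ lend0 <= lend u b, lend u b <= rend u b & rend u b <= rend0].
Proof.
move=> b01; split; last 2 first.
- by have [] := level_pos_itvcc b01.
- by apply: (ub_le_sup rend_ubounded); exists b.
by apply: (ge_inf lend_lbounded); exists b.
Qed.

Lemma ends_approx0 e : 0 < e ->
  exists2 b, 0 < b <= 1 & lend u b < lend0 + e /\ rend0 - e < rend u b.
Proof.
move=> e0; have P01_1 : P01 1 by rewrite /P01 /= ltr01 lexx.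
have [_ [b1 /andP[b1_gt0 b1_le1] <-] Lb1] :=
  inf_adherent e0 (conj (ex_intro _ _ (imageP _ P01_1)) lend_lbounded).
have [_ [b2 /andP[b2_gt0 b2_le1] <-] Ub2] :=
  sup_adherent e0 (conj (ex_intro _ _ (imageP _ P01_1)) rend_ubounded).
rewrite -/lend0 in Lb1; rewrite -/rend0 in Ub2.
have [b12|b21] := leP b1 b2.
  have [? ?] := ends_nested_pos b1_gt0 b12 b2_le1.
  by exists b1; [rewrite b1_gt0 | split; lra].
have [? ?] := ends_nested_pos b2_gt0 (ltW b21) b1_le1.
by exists b2; [rewrite b2_gt0 | split; lra].
Qed.

Lemma level0_fuzzy : level u 0 = `[lend0, rend0]%classic.
Proof.
rewrite /level eqxx support_ends_union.
exact: closure_ends_union ends_within0 ends_approx0.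
Qed.

Lemma ends0 : lend u 0 = lend0 /\ rend u 0 = rend0.
Proof.
have [? ? ?] := ends_within0 (ltac:(by rewrite ltr01 lexx) : 0 < 1 <= 1).
by rewrite /lend /rend level0_fuzzy inf_itvcc ?sup_itvcc //; lra.
Qed.

Lemma ends_left_cont_fuzzy a e : 0 < a <= 1 -> 0 < e ->
  exists2 b, 0 <= b < a & lend u a - e < lend u b /\ rend u b < rend u a + e.
Proof.
move=> /[dup] a01 /andP[_ a1] e0.
have [b1 /andP[b1_gt0 b1a] Lb1] := lend_left_cont a01 e0.
have [b2 /andP[b2_gt0 b2a] Ub2] := rend_left_cont a01 e0.
have [b12|b21] := leP b1 b2.
  have [? ?] := ends_nested_pos b1_gt0 b12 (le_trans (ltW b2a) a1).
  by exists b2; [rewrite ltW | split; lra].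
have [? ?] := ends_nested_pos b2_gt0 (ltW b21) (le_trans (ltW b1a) a1).
by exists b1; [rewrite ltW | split; lra].
Qed.

Theorem interval_levels_fuzzy : interval_levels u.
Proof.
have [lend0E rend0E] := ends0.
have within0 b : 0 < b <= 1 ->
    [/\ lend u 0 <= lend u b, lend u b <= rend u b & rend u b <= rend u 0].
  by rewrite lend0E rend0E; exact: ends_within0.
have le0 : lend u 0 <= rend u 0.
  by have [? ? ?] := within0 1 (ltac:(by rewrite ltr01 lexx)); lra.
split; first split.
- move=> a /andP[]; rewrite le0r => /predU1P[->//|a_gt0] a1.
  by have [] := level_pos_itvcc (ltac:(by rewrite a_gt0 a1) : 0 < a <= 1).
- move=> a b; rewrite le0r => /predU1P[->|a_gt0] ab b1; last exact: ends_nested_pos.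
  move: ab; rewrite le0r => /predU1P[<-|b_gt0]; first by rewrite !lexx.
  by have [? ? ?] := within0 b (ltac:(by rewrite b_gt0 b1)).
- exact: ends_left_cont_fuzzy.
- by rewrite lend0E rend0E; exact: ends_approx0.
move=> a /andP[]; rewrite le0r => /predU1P[->|a_gt0] a1; last first.
  by have [] := level_pos_itvcc (ltac:(by rewrite a_gt0 a1) : 0 < a <= 1).
by rewrite lend0E rend0E; exact: level0_fuzzy.
Qed.

End fuzzy_number.

Section fuzzy_distance.
Variable R : realType.
Implicit Types (u v : R -> R) (a : R).

Let ends_bounded u : interval_levels u ->
  exists M, forall a, 0 <= a <= 1 -> `|lend u a| <= M /\ `|rend u a| <= M.
Proof.
move=> [[le_u nested _ _] _]; exists (`|lend u 0| + `|rend u 0|) => a /andP[a0 a1].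
have [? ?] := nested 0 a (lexx 0) a0 a1; have := le_u a (ltac:(by rewrite a0 a1)).
have := ler_norm (- lend u 0); have := ler_norm (rend u 0); rewrite normrN.
have := normr_ge0 (lend u 0); have := normr_ge0 (rend u 0).
by rewrite !ler_norml; split; apply/andP; split; lra.
Qed.

Lemma ends_dist_le_fdist u v a : interval_levels u -> interval_levels v ->
  0 <= a <= 1 ->
  `|lend u a - lend v a| <= fdist u v /\ `|rend u a - rend v a| <= fdist u v.
Proof.
move=> Iu Iv a01; have [Mu HMu] := ends_bounded Iu; have [Mv HMv] := ends_bounded Iv.
have dists_ub : has_ubound [set d | exists a, 0 <= a <= 1 /\
    d = Num.max `|lend u a - lend v a| `|rend u a - rend v a|].
  exists (Mu + Mv) => _ [b [b01 ->]].
  have [? ?] := HMu b b01; have [? ?] := HMv b b01.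
  by rewrite ge_max; apply/andP; split; apply: le_trans (ler_normB _ _) _; exact: lerD.
have : Num.max `|lend u a - lend v a| `|rend u a - rend v a| <= fdist u v.
  by apply: (ub_le_sup dists_ub); exists a.
by rewrite ge_max => /andP[].
Qed.

Lemma fdist_ge0 u v : interval_levels u -> interval_levels v -> 0 <= fdist u v.
Proof.
have a01 : 0 <= (0 : R) <= 1 by rewrite lexx ler01.
by move=> Iu Iv; have [+ _] := ends_dist_le_fdist Iu Iv a01; exact: le_trans.
Qed.

Lemma fdist_le u v c :
  (forall a, 0 <= a <= 1 -> `|lend u a - lend v a| <= c /\ `|rend u a - rend v a| <= c) ->
  fdist u v <= c.
Proof.
move=> le_c; apply: ge_sup.
  by exists (Num.max `|lend u 0 - lend v 0| `|rend u 0 - rend v 0|), 0; rewrite lexx ler01.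
by move=> _ [a [a01 ->]]; have [? ?] := le_c a a01; rewrite ge_max; apply/andP.
Qed.

Lemma fdist_euler_mean_le (p : R) (s : nat -> R -> R) (nu : R -> R) n : 0 <= p ->
  (forall k, interval_levels (s k)) -> interval_levels nu ->
  fdist (euler_mean p s n) nu <= \sum_(k < n.+1) euler_weight p n k * fdist (s k) nu.
Proof.
move=> p0 Is Inu; apply: fdist_le => a a01; have [-> ->] := ends_euler_mean n p0 Is a01.
have mean_le x y : (forall k, `|x k - y| <= fdist (s k) nu) ->
    `|\sum_(k < n.+1) euler_weight p n k * x k - y| <=
    \sum_(k < n.+1) euler_weight p n k * fdist (s k) nu.
  by apply: weighted_mean_dist_le; [exact: euler_weight_ge0 | exact: sum_euler_weight].
by split; [apply: (mean_le (fun k => lend (s k) a)) | apply: (mean_le (fun k => rend (s k) a))]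
  => k; have [] := ends_dist_le_fdist (Is k) Inu a01.
Qed.

End fuzzy_distance.

Theorem mainTheorem4 (R : realType) (p : R) (u : nat -> R -> R) (nu : R -> R) :
  0 < p ->
  (forall n, is_fuzzy (u n)) ->
  is_fuzzy nu ->
  (fun n => fdist (fsum u n) nu) @ \oo --> (0 : R) ->
  (fun n => fdist (euler_mean p (fsum u) n) nu) @ \oo --> (0 : R).
Proof.
move=> /ltW p0 u_fuzzy /interval_levels_fuzzy Inu s_cvg.
have Is := interval_levels_fsum (fun k => interval_levels_fuzzy (u_fuzzy k)).
have toeplitz := nonneg_toeplitz (euler_weight_ge0 p0) (sum_euler_weight p0)
  (euler_weight_cvg0 p0) s_cvg.
apply: (squeeze_cvgr _ (cvg_cst 0) toeplitz).
by near=> n; rewrite fdist_ge0 ?fdist_euler_mean_le //; exact: interval_levels_euler_mean.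
Unshelve. all: end_near.
Qed.
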